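(* Let $m\geq 2$ and $H\in\mathbb{R}^{m\times m}$. Let $A\subset\mathbb{R}^m$ be a nonempty set with $A\neq\{0\}$, and let $f:A\to\mathbb{R}$ be defined by $f(x):=x^THx$. Then $f$ is objective if and only if there exist a nonempty set $\Gamma\subset\mathbb{R}_+$ and $\alpha\in\mathbb{R}$ such that $A=\Gamma\cdot S^{m-1}:=\{tx\mid t\in\Gamma,\ x\in S^{m-1}\}$ and $\tfrac12(H+H^T)=\alpha I_m$.
   Context: $\mathbb{R}^m$ carries the usual inner product and Euclidean norm $\|\cdot\|$, and its elements are regarded as $m\times1$ column matrices. $\mathbb{R}_+=[0,\infty)$, $S^{m-1}:=\{x\in\mathbb{R}^m\mid\|x\|=1\}$, and $I_m$ is the $m\times m$ identity matrix. $\mathcal{Q}_m:=\{Q\in\mathbb{R}^{m\times m}\mid Q^TQ=I_m,\ \det Q=1\}$. A subset $A\subset\mathbb{R}^m$ is called objective if $Qy\in A$ for all $y\in A$ and all $Q\in\mathcal{Q}_m$. A function $f:A\to\mathbb{R}$ is called objective if its domain $A$ is objective and $f(Qy)=f(y)$ for all $y\in A$ and all $Q\in\mathcal{Q}_m$. *)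

From HB Require Import structures.
From mathcomp Require Import all_boot all_order all_algebra.
From mathcomp Require Export classical_sets reals.
Set Implicit Arguments. Unset Strict Implicit. Unset Printing Implicit Defensive.
Import Order.TTheory GRing.Theory Num.Theory.
Local Open Scope ring_scope.
Local Open Scope classical_set_scope.

Section Defs.
Variable R : realType.
Variable m : nat.

Definition eucl_norm (x : 'cV[R]_m) : R := Num.sqrt ((x^T *m x) 0 0).

Definition sphere : set 'cV[R]_m := [set x | eucl_norm x = 1].

Definition rotation (Q : 'M[R]_m) : Prop := Q^T *m Q = 1%:M /\ \det Q = 1.

Definition objective_set (A : set 'cV[R]_m) : Prop :=
  forall Q y, rotation Q -> A y -> A (Q *m y).

(* f : A -> R objective (only values of f on A matter) *)
Definition objective_fun (A : set 'cV[R]_m) (f : 'cV[R]_m -> R) : Prop :=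
  objective_set A /\ forall Q y, rotation Q -> A y -> f (Q *m y) = f y.

Definition quad (H : 'M[R]_m) (x : 'cV[R]_m) : R := (x^T *m H *m x) 0 0.
End Defs.

(* Rotations act transitively on each sphere ||x|| = r once m >= 2 (a product of two
   Householder reflections moves x to any y of the same norm), so a set is objective iff it
   is a union of spheres, i.e. A = Gamma . S^{m-1} with Gamma the set of norms of points of A.
   For the quadratic form, invariance at one nonzero x0 in A already forces
   x^T H x = alpha ||x||^2 for every x: rescale x to the norm of x0 and rotate x0 onto it.
   By polarization this says exactly that the symmetric part of H is alpha I. *)

From HB Require Import structures.
From mathcomp Require Import all_boot all_order all_algebra.
From mathcomp Require Import classical_sets reals.
From mathcomp Require Import ring lra.
Import Order.TTheory GRing.Theory Num.Theory.
Set Implicit Arguments. Unset Strict Implicit. Unset Printing Implicit Defensive.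
Local Open Scope ring_scope.
Local Open Scope classical_set_scope.

Section InnerProduct.
Variables (R : realType) (n : nat).
Implicit Types (x y z : 'cV[R]_n) (K L : 'M[R]_n).

Definition dot x y : R := (x^T *m y) 0 0.
Definition bil K x y : R := (x^T *m K *m y) 0 0.

Lemma dotC x y : dot x y = dot y x.
Proof. by rewrite /dot -(trmxK (x^T *m y)) mxE trmx_mul trmxK. Qed.

Lemma dotDl x y z : dot (x + y) z = dot x z + dot y z.
Proof. by rewrite /dot linearD mulmxDl mxE. Qed.

Lemma dotDr x y z : dot z (x + y) = dot z x + dot z y.
Proof. by rewrite /dot mulmxDr mxE. Qed.

Lemma dotNl x z : dot (- x) z = - dot x z.
Proof. by rewrite /dot linearN mulNmx mxE. Qed.

Lemma dotNr x z : dot z (- x) = - dot z x.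
Proof. by rewrite /dot mulmxN mxE. Qed.

Lemma dotZl a x z : dot (a *: x) z = a * dot x z.
Proof. by rewrite /dot linearZ /= -scalemxAl mxE. Qed.

Lemma dotZr a x z : dot z (a *: x) = a * dot z x.
Proof. by rewrite /dot -scalemxAr mxE. Qed.

Lemma dot_sum x : dot x x = \sum_i x i 0 ^+ 2.
Proof. by rewrite /dot mxE; apply: eq_bigr => i _; rewrite mxE expr2. Qed.

Lemma dot_ge0 x : 0 <= dot x x.
Proof. by rewrite dot_sum; apply: sumr_ge0 => i _; apply: sqr_ge0. Qed.

Lemma dot_eq0 x : (dot x x == 0) = (x == 0).
Proof.
apply/eqP/eqP => [|->]; last by rewrite /dot mulmx0 mxE.
rewrite dot_sum => /psumr_eq0P x0; apply/matrixP => i j.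
rewrite (ord1 j) mxE; apply/eqP; rewrite -sqrf_eq0; apply/eqP.
by apply: x0 => // k _; apply: sqr_ge0.
Qed.

Lemma dot_gt0 x : x != 0 -> 0 < dot x x.
Proof. by move=> nx; rewrite lt_def dot_eq0 nx dot_ge0. Qed.

Lemma dot_delta i y : dot (delta_mx i 0) y = y i 0.
Proof. by rewrite /dot trmx_delta -rowE mxE. Qed.

Lemma bil_delta K i j : bil K (delta_mx i 0) (delta_mx j 0) = K i j.
Proof. by rewrite /bil trmx_delta -rowE -colE !mxE. Qed.

Lemma bilDl K x y z : bil K (x + y) z = bil K x z + bil K y z.
Proof. by rewrite /bil linearD !mulmxDl mxE. Qed.

Lemma bilDr K x y z : bil K z (x + y) = bil K z x + bil K z y.
Proof. by rewrite /bil mulmxDr mxE. Qed.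

Lemma bilZl K a x z : bil K (a *: x) z = a * bil K x z.
Proof. by rewrite /bil linearZ /= -!scalemxAl mxE. Qed.

Lemma bilZr K a x z : bil K z (a *: x) = a * bil K z x.
Proof. by rewrite /bil -scalemxAr mxE. Qed.

Lemma bil_trmx K x y : bil K^T x y = bil K y x.
Proof.
by rewrite /bil -(trmxK (y^T *m K *m x)) [in RHS]mxE !trmx_mul trmxK mulmxA.
Qed.

Lemma bilD K L x y : bil (K + L) x y = bil K x y + bil L x y.
Proof. by rewrite /bil mulmxDr mulmxDl mxE. Qed.

Lemma bilB K L x y : bil (K - L) x y = bil K x y - bil L x y.
Proof. by rewrite /bil mulmxBr mulmxBl !mxE. Qed.

Lemma bil_scalar a x y : bil a%:M x y = a * dot x y.
Proof. by rewrite /bil mul_mx_scalar -scalemxAl mxE. Qed.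

Lemma sym_bil_diag0 K : K^T = K -> (forall y, bil K y y = 0) -> K = 0.
Proof.
move=> symK K0; apply/matrixP => i j; rewrite mxE.
have Kji : K j i = K i j by rewrite -[in LHS]symK mxE.
have := K0 (delta_mx i 0 + delta_mx j 0).
rewrite !bilDl !bilDr !bil_delta.
have := K0 (delta_mx i 0); have := K0 (delta_mx j 0).
rewrite !bil_delta Kji; lra.
Qed.

Lemma quad_bil K x : quad K x = bil K x x.
Proof. by []. Qed.

Lemma quad_scalarP K (alpha : R) :
  (forall y, quad K y = alpha * dot y y) <-> (1 / 2) *: (K + K^T) = alpha%:M.
Proof.
have two_quad y : 2 * quad K y = bil (K + K^T) y y.
  by rewrite quad_bil bilD bil_trmx mulr2n mulrDl mul1r.
have two_neq0 : (2 : R) != 0 by rewrite pnatr_eq0.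
split=> [qK | symK y].
- suff -> : K + K^T = (2 * alpha)%:M.
    by rewrite scale_scalar_mx mulrA mul1r mulVf ?mul1r.
  apply/eqP; rewrite -subr_eq0; apply/eqP/sym_bil_diag0 => [|y].
    by rewrite !linearD /= linearN /= trmxK tr_scalar_mx (addrC K^T).
  by rewrite bilB -two_quad qK bil_scalar mulrA subrr.
- apply: (mulfI two_neq0); rewrite two_quad.
  have -> : K + K^T = (2 * alpha)%:M.
    by rewrite -scale_scalar_mx -symK scalerA mul1r divff ?scale1r.
  by rewrite bil_scalar mulrA.
Qed.

End InnerProduct.

Section Rotations.
Variables (R : realType) (n : nat).
Implicit Types (u v w x y : 'cV[R]_n).

(* Block factorisation
   [[1,0],[v^T,1]] [[1+u v^T,u],[0,1]] [[1,0],[-v^T,1]] = [[1,u],[0,1+v^T u]]. *)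
Lemma det_1_add_rank1 u v : \det (1%:M + u *m v^T) = 1 + (v^T *m u) 0 0.
Proof.
pose L : 'M[R]_(n + 1) := block_mx 1%:M 0 v^T 1%:M.
pose M : 'M[R]_(n + 1) := block_mx (1%:M + u *m v^T) u 0 1%:M.
pose N : 'M[R]_(n + 1) := block_mx 1%:M 0 (- v^T) 1%:M.
have LMN : L *m (M *m N) = block_mx 1%:M u 0 (1 + (v^T *m u) 0 0)%:M.
  rewrite /L /M /N !mulmx_block !mulmx1 !mulmx0 !mul0mx !mul1mx !addr0 !add0r.
  rewrite mulmxN addrK mulmx1 subrr addrC.
  by rewrite {1}[v^T *m u]mx11_scalar raddfD.
have := congr1 determinant LMN.
rewrite !det_mulmx /L /M /N !det_lblock !det_ublock !det1 !det_scalar1.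
by rewrite !mul1r !mulr1.
Qed.

Definition householder v : 'M[R]_n := 1%:M - (2 / dot v v) *: (v *m v^T).

Lemma householderE v x :
  householder v *m x = x - (2 * dot v x / dot v v) *: v.
Proof.
rewrite /householder mulmxBl mul1mx -scalemxAl -mulmxA [v^T *m x]mx11_scalar.
by rewrite mul_mx_scalar scalerA mulrAC.
Qed.

Lemma householder_tr v : (householder v)^T = householder v.
Proof. by rewrite /householder linearB /= trmx1 linearZ /= trmx_mul trmxK. Qed.

Lemma householder_v v : v != 0 -> householder v *m v = - v.
Proof.
rewrite -dot_eq0 => nv; rewrite householderE mulrK ?unitfE //.
by rewrite -[2]/(1 + 1) scalerDl scale1r opprD addrA subrr add0r.
Qed.

Lemma householderK v : v != 0 -> householder v *m householder v = 1%:M.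
Proof.
move=> nv; rewrite {2}/householder mulmxBr mulmx1 -scalemxAr mulmxA.
by rewrite householder_v // mulNmx scalerN opprK /householder subrK.
Qed.

Lemma det_householder v : v != 0 -> \det (householder v) = -1.
Proof.
rewrite -dot_eq0 => nv.
have -> : householder v = 1%:M + (- (2 / dot v v) *: v) *m v^T.
  by rewrite /householder -scalemxAl scaleNr.
rewrite det_1_add_rank1 -scalemxAr mxE -/(dot v v) mulNr divfK //.
by rewrite -[2]/(1 + 1) opprD addrA subrr add0r.
Qed.

Lemma rotation_householder2 v w : v != 0 -> w != 0 ->
  rotation (householder w *m householder v).
Proof.
move=> nv nw; split; last by rewrite det_mulmx !det_householder // mulrNN mulr1.
rewrite trmx_mul !householder_tr mulmxA -(mulmxA (householder v)).
by rewrite householderK // mulmx1 householderK.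
Qed.

Lemma rotation1 : rotation (1%:M : 'M[R]_n).
Proof. by split; [rewrite trmx1 mulmx1 | exact: det1]. Qed.

Lemma rotation_dot (Q : 'M[R]_n) y : rotation Q -> dot (Q *m y) (Q *m y) = dot y y.
Proof. by case=> QTQ _; rewrite /dot trmx_mul mulmxA -(mulmxA y^T) QTQ mulmx1. Qed.

Lemma exists_orthogonal y : (2 <= n)%N -> exists2 w, w != 0 & dot w y = 0.
Proof.
move=> n2; pose i1 : 'I_n := Ordinal n2; pose i0 : 'I_n := Ordinal (ltnW n2).
have [y1_0|y1_neq0] := eqVneq (y i1 0) 0.
  exists (delta_mx i1 0); last by rewrite dot_delta.
  by apply/eqP => /matrixP /(_ i1 0); rewrite !mxE !eqxx /= => /eqP; rewrite oner_eq0.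
exists (y i1 0 *: delta_mx i0 0 - y i0 0 *: delta_mx i1 0).
  apply/eqP => /matrixP /(_ i0 0); rewrite !mxE !eqxx /= mulr1 mulr0 subr0.
  by move=> /eqP; rewrite (negbTE y1_neq0).
by rewrite dotDl dotNl !dotZl !dot_delta mulrC subrr.
Qed.

(* The reflection along x - y swaps x and y but has determinant -1; composing with a
   reflection fixing y (which needs a second dimension) repairs the sign. *)
Lemma rotation_transitive x y : (2 <= n)%N -> dot x x = dot y y ->
  exists2 Q, rotation Q & Q *m x = y.
Proof.
move=> n2 xy; have [<-|nxy] := eqVneq x y.
  by exists 1%:M; [exact: rotation1 | exact: mul1mx].
have [w nw wy] := exists_orthogonal y n2.
pose v := x - y; have nv : v != 0 by rewrite subr_eq0.
exists (householder w *m householder v); first exact: rotation_householder2.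
have dvv : dot v v = 2 * dot v x.
  by rewrite /v !dotDl !dotNl !dotDr !dotNr (dotC x y) xy; ring.
rewrite -mulmxA (householderE v) -dvv divff ?dot_eq0 // scale1r /v opprB addrC subrK.
by rewrite householderE wy mulr0 mul0r scale0r subr0.
Qed.

End Rotations.

Section Objectivity.
Variables (R : realType) (m : nat).
Implicit Types (A : set 'cV[R]_m) (x y z : 'cV[R]_m).

Lemma eucl_normE x : eucl_norm x = Num.sqrt (dot x x).
Proof. by []. Qed.

Lemma eucl_norm0 : eucl_norm (0 : 'cV[R]_m) = 0.
Proof. by rewrite eucl_normE /dot mulmx0 mxE sqrtr0. Qed.

Lemma eucl_norm_ge0 x : 0 <= eucl_norm x.
Proof. exact: sqrtr_ge0. Qed.

Lemma sphereP x : sphere x <-> dot x x = 1.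
Proof.
rewrite /sphere /= eucl_normE; split=> [x1|->]; last exact: sqrtr1.
by rewrite -(sqr_sqrtr (dot_ge0 x)) x1 expr1n.
Qed.

Lemma dot_scale_sphere t x : sphere x -> dot (t *: x) (t *: x) = t ^+ 2.
Proof. by move=> /sphereP x1; rewrite dotZl dotZr x1 mulr1 expr2. Qed.

Lemma sphere_normalize z : z != 0 -> sphere ((eucl_norm z)^-1 *: z).
Proof.
move=> nz; apply/sphereP; rewrite dotZl dotZr mulrA -expr2 exprVn eucl_normE.
by rewrite sqr_sqrtr ?dot_ge0 // mulVf ?dot_eq0.
Qed.

Definition shells (Gamma : set R) : set 'cV[R]_m :=
  [set t *: x | t in Gamma & x in @sphere R m].

Lemma objective_shells Gamma : objective_set (shells Gamma).
Proof.
move=> Q _ rotQ [t Gt [x /sphereP x1 <-]]; exists t => //.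
by exists (Q *m x); [apply/sphereP; rewrite rotation_dot | rewrite scalemxAr].
Qed.

Lemma objective_setP A : (2 <= m)%N ->
  objective_set A <-> forall a y, A a -> dot y y = dot a a -> A y.
Proof.
move=> m2; split=> [objA a y Aa ya | normA Q y rotQ Ay].
  by have [Q rotQ <-] := rotation_transitive m2 (esym ya); apply: objA.
by apply: (normA y) => //; rewrite rotation_dot.
Qed.

Lemma shells_eucl_norm A : (2 <= m)%N -> objective_set A ->
  A = shells (@eucl_norm R m @` A).
Proof.
move=> m2 objA; have normA := (objective_setP A m2).1 objA.
apply/seteqP; split=> [z Az | _ [_ [a Aa <-] [x x1 <-]]].
  exists (eucl_norm z); first by exists z.
  have [->|nz] := eqVneq z 0.
    exists (delta_mx (Ordinal (ltnW m2)) 0); last by rewrite eucl_norm0 scale0r.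
    by apply/sphereP; rewrite dot_delta mxE !eqxx.
  exists ((eucl_norm z)^-1 *: z); first exact: sphere_normalize.
  by rewrite scalerA divff ?scale1r // eucl_normE sqrtr_eq0 -ltNge dot_gt0.
apply: (normA a) => //.
by rewrite dot_scale_sphere // eucl_normE sqr_sqrtr ?dot_ge0.
Qed.

Lemma quad_invariant_scalar (H : 'M[R]_m) x0 : (2 <= m)%N -> x0 != 0 ->
  (forall Q, rotation Q -> quad H (Q *m x0) = quad H x0) ->
  forall y, quad H y = quad H x0 / dot x0 x0 * dot y y.
Proof.
move=> m2 nx0 invH y; have [->|ny] := eqVneq y 0.
  by rewrite /quad /dot !mulmx0 !mxE mulr0.
have d0_gt0 := dot_gt0 nx0; have dy_gt0 := dot_gt0 ny.
pose s := Num.sqrt (dot x0 x0 / dot y y).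
have ss : s * s = dot x0 x0 / dot y y.
  by rewrite -expr2 sqr_sqrtr // divr_ge0 ?ltW.
have [Q rotQ Qx0] : exists2 Q, rotation Q & Q *m x0 = s *: y.
  by apply: rotation_transitive; rewrite // dotZl dotZr mulrA ss divfK ?gt_eqF.
have := invH Q rotQ; rewrite Qx0 !quad_bil bilZl bilZr mulrA ss -!quad_bil => <-.
by field; rewrite !gt_eqF.
Qed.

End Objectivity.

Theorem corollary2 (R : realType) (m : nat) (H : 'M[R]_m) (A : set 'cV[R]_m) :
  (2 <= m)%N -> A <> set0 -> A <> [set 0] ->
  (objective_fun A (quad H) <->
   exists (Gamma : set R) (alpha : R),
     [/\ Gamma <> set0, Gamma `<=` [set t | 0 <= t],
         A = [set t *: x | t in Gamma & x in @sphere R m] &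
         (1 / 2 : R) *: (H + H^T) = alpha%:M]).
Proof.
move=> m2 A_neq0 A_neq1; split.
- case=> objA invH.
  have [x0 Ax0 nx0] : exists2 x0, A x0 & x0 != 0.
    apply: (boolp.contra_notP _ A_neq1) => noA.
    have /subset_set1[] // : A `<=` [set 0].
    by move=> x Ax; apply/eqP/contraT => nx; case: noA; exists x.
  exists (@eucl_norm R m @` A), (quad H x0 / dot x0 x0); split.
  + by move/image_set0_set0.
  + by move=> _ [x _ <-]; exact: eucl_norm_ge0.
  + exact: shells_eucl_norm.
  + apply/quad_scalarP/quad_invariant_scalar => // Q rotQ; exact: invH.
- case=> Gamma [alpha [_ _ -> /quad_scalarP quadH]]; split.
  + exact: objective_shells.
  + by move=> Q y rotQ _; rewrite !quadH rotation_dot.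
Qed.
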